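(* Let $\mathbb{P}_\omega$ be a centred least-squares problem with $r<n$ in simplified form. If $\mathbb{P}_\omega$ admits an essentially perfect solution, then $B$ is indefinite (has both a positive and a negative eigenvalue).
   Context: For real symmetric $n\times n$ $A\neq O$ (positive semidefinite) and $B$, $t,b\in\mathbb{R}^n$, $k\in\mathbb{R}$, problem $\mathbb{P}_\omega$ minimises $L(x)=(x-t)^\top A(x-t)$ over the nonempty set $X=\{x:x^\top Bx+2b^\top x-k=0\}$, with $\underline L=\inf_XL$. Centred least-squares with $r<n$: $t=0$, $A=\operatorname{diag}(I_r,O_{n-r})$, $1\le r<n$. Simplified form: for some $0\le s_0\le n-r$ and nonsingular diagonal $s_0\times s_0$ $\Gamma_0$, $B=\begin{pmatrix}B_{11}&C_{10}&O\\C_{10}^\top&O_{n-r-s_0}&O\\O&O&\Gamma_0\end{pmatrix}$ (block sizes $r,n-r-s_0,s_0$; empty blocks absent). $\mathbb{P}_\omega$ admits an essentially perfect solution if $L(x)>0$ for all $x\in X$ but $\underline L=0$. *)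

From HB Require Import structures.
From mathcomp Require Import all_boot all_order all_algebra.
Set Implicit Arguments. Unset Strict Implicit. Unset Printing Implicit Defensive.
Import Order.TTheory GRing.Theory Num.Theory.
Local Open Scope ring_scope.

Section LS.
Variable R : rcfType.

Definition lsA (n r : nat) : 'M[R]_n :=
  \matrix_(i, j) ((((i == j) && (i < r)%N) : bool)%:R).

Definition qform (n : nat) (M : 'M[R]_n) (x y : 'cV[R]_n) : R :=
  (x^T *m M *m y) ord0 ord0.

Definition Lfun (n : nat) (A : 'M[R]_n) (t x : 'cV[R]_n) : R :=
  qform A (x - t) (x - t).

Definition Xset (n : nat) (B : 'M[R]_n) (b : 'cV[R]_n) (k : R) (x : 'cV[R]_n) : Prop :=
  qform B x x + 2 * (b^T *m x) ord0 ord0 - k = 0.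

Definition is_inf (n : nat) (S : 'cV[R]_n -> Prop) (f : 'cV[R]_n -> R) (l : R) : Prop :=
  (forall x, S x -> l <= f x) /\
  (forall l', (forall x, S x -> l' <= f x) -> l' <= l).

Definition essentially_perfect (n : nat) (A : 'M[R]_n) (t : 'cV[R]_n)
    (B : 'M[R]_n) (b : 'cV[R]_n) (k : R) : Prop :=
  (forall x, Xset B b k x -> 0 < Lfun A t x) /\ is_inf (Xset B b k) (Lfun A t) 0.

(* simplified form of B, with blocks of sizes r, m = n-r-s0, s0 *)
Definition simplB (r m s0 : nat) (B11 : 'M[R]_r) (C10 : 'M[R]_(r, m))
    (G0 : 'M[R]_s0) : 'M[R]_(r + m + s0) :=
  block_mx (block_mx B11 C10 C10^T 0) 0 0 G0.

Definition indefinite (n : nat) (B : 'M[R]_n) : Prop :=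
  (exists a : R, 0 < a /\ eigenvalue B a) /\ (exists a : R, a < 0 /\ eigenvalue B a).

End LS.

(* If the coupling block C10 is nonzero, pick C10 i j <> 0: on vectors carrying
   t in coordinate i of the first block and 1 in coordinate j of the second,
   the quadratic form of B is t^2 B11 i i + 2 t C10 i j, which takes both signs.
   A real symmetric matrix whose quadratic form takes a negative value has a
   negative eigenvalue (spectral theorem for its complexification), so B is
   indefinite.
   If C10 = 0 the constraint decouples as f u + h v w = 0, where L = |u|^2,
   f u = u^T B11 u + 2 b1^T u and h does not involve u.  Positivity of L on X
   means that h never vanishes; hence b2 = 0 and, completing the square in the
   diagonal form Gamma0, |h| >= d for some d > 0.  As f u -> 0 when u -> 0,
   every feasible point has |u|^2 >= e for some e > 0, contradicting inf L = 0:
   there is no essentially perfect solution in that case. *)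

From HB Require Import structures.
From mathcomp Require Import all_boot all_order all_algebra.
From mathcomp Require Import sesquilinear spectral complex.
From mathcomp Require Import ring lra.
Import Order.TTheory GRing.Theory Num.Theory.
Local Open Scope ring_scope.

Section HermitianSpectrum.
Local Open Scope sesquilinear_scope.
Variable C : numClosedFieldType.

Lemma hermitian_eigenvalue_lt0 n (A : 'M[C]_n) (y : 'rV[C]_n) :
  A \is hermsymmx -> (y *m A *m y ^t*) 0 0 < 0 ->
  exists2 a, a < 0 & eigenvalue A a.
Proof.
move=> Aherm yAy_lt0.
have /orthomx_spectralP Aeq := hermitian_normalmx Aherm.
have /mxOverP d_real := hermitian_spectral_diag_real Aherm.
set P := spectralmx A in Aeq; set d := spectral_diag A in Aeq d_real.
have P_unitary : P \is unitarymx := spectral_unitarymx A.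
have P_unit : P \in unitmx := spectral_unit A.
pose z := y *m P ^t*.
have yAyE : (y *m A *m y ^t*) 0 0 = \sum_i d 0 i * `|z 0 i| ^+ 2.
  have zC : z ^t* = P *m y ^t* by rewrite trmx_mul map_mxM trmxCK.
  rewrite Aeq invmx_unitary // !mulmxA -[_ *m P *m _]mulmxA -zC mxE.
  by apply: eq_bigr => i _; rewrite mul_mx_diag !mxE normCK mulrAC [RHS]mulrC.
have /existsP[i di_lt0] : [exists i, d 0 i < 0].
  apply: contraLR yAy_lt0 => /existsPn d_ge0.
  rewrite yAyE; apply/negbT/le_gtF/sumr_ge0 => i _.
  by rewrite mulr_ge0 ?exprn_ge0 // real_leNgt ?real0 ?d_real.
exists (d 0 i) => //; apply/eigenvalueP; exists (row i P).
  have PA : P *m A = diag_mx d *m P by rewrite Aeq !mulmxA mulmxV ?mul1mx.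
  by rewrite -row_mul PA mul_diag_mx; apply/rowP => j; rewrite !mxE.
have /row_unitarymxP/(_ i i) := P_unitary.
by apply: contra_eq_neq => ->; rewrite eqxx dotmxE mul0mx mxE eq_sym oner_neq0.
Qed.

End HermitianSpectrum.

Section RealSymmetric.
Local Open Scope sesquilinear_scope.
Local Open Scope complex_scope.
Variable R : rcfType.

Lemma symmetric_eigenvalue_lt0 n (M : 'M[R]_n) (x : 'cV[R]_n) :
  M^T = M -> qform M x x < 0 -> exists2 a, a < 0 & eigenvalue M a.
Proof.
move=> M_sym qx_lt0.
pose A := map_mx (real_complex R) M.
have A_herm : A \is hermsymmx.
  apply/is_hermitianmxP; rewrite expr0 scale1r.
  apply/matrixP => i j; rewrite !mxE -[in RHS]M_sym mxE.
  exact/esym/conjc_real.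
pose y := (map_mx (real_complex R) x)^T.
have yAy : (y *m A *m y ^t*) 0 0 = (qform M x x)%:C.
  have yC : y ^t* = map_mx (real_complex R) x.
    by apply/matrixP => i j; rewrite !mxE; exact: conjc_real.
  by rewrite yC /y map_trmx -!map_mxM mxE.
have [a a_lt0 Aa] : exists2 a, a < 0 & eigenvalue A a.
  by apply: (@hermitian_eigenvalue_lt0 _ _ _ y A_herm); rewrite yAy ltcR.
have aE : (complex.Re a)%:C = a by rewrite complexRe; apply/Creal_ReP/ltr0_real.
exists (complex.Re a); first by rewrite -ltcR aE.
rewrite eigenvalue_root_char -(fmorph_root (real_complex R)) map_char_poly.
by move: Aa; rewrite eigenvalue_root_char -aE.
Qed.

Lemma symmetric_indefinite n (M : 'M[R]_n) x y : M^T = M ->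
  qform M x x < 0 -> 0 < qform M y y -> indefinite M.
Proof.
move=> M_sym qx_lt0 qy_gt0; split; last first.
  by have [a a_lt0 Ma] := @symmetric_eigenvalue_lt0 _ M x M_sym qx_lt0; exists a.
have NM_sym : (- M)^T = - M by rewrite linearN /= M_sym.
have [a a_lt0 /eigenvalueP[v vM v_neq0]] : exists2 a, a < 0 & eigenvalue (- M) a.
  apply: (@symmetric_eigenvalue_lt0 _ _ y NM_sym).
  by rewrite /qform mulmxN mulNmx mxE oppr_lt0.
exists (- a); split; first by rewrite oppr_gt0.
apply/eigenvalueP; exists v => //.
by apply: oppr_inj; rewrite -mulmxN vM scaleNr opprK.
Qed.

End RealSymmetric.

Section LeastSquares.
Variable R : rcfType.

Definition sqnorm {n} (u : 'cV[R]_n) : R := \sum_i u i 0 ^+ 2.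

Definition bounded_away_from0 {T : Type} (f : T -> R) : Prop :=
  exists2 d, 0 < d & forall x, d <= `|f x|.

Lemma qformE n (M : 'M[R]_n) x y :
  qform M x y = \sum_j \sum_i x i 0 * M i j * y j 0.
Proof.
rewrite /qform mxE; apply: eq_bigr => j _; rewrite mxE big_distrl.
by apply: eq_bigr => i _; rewrite !mxE.
Qed.

Lemma dotE n (a u : 'cV[R]_n) : (a^T *m u) 0 0 = \sum_i a i 0 * u i 0.
Proof. by rewrite mxE; apply: eq_bigr => i _; rewrite !mxE. Qed.

Lemma qform_diag n (g : 'rV[R]_n) w :
  qform (diag_mx g) w w = \sum_j g 0 j * w j 0 ^+ 2.
Proof.
rewrite /qform mul_mx_diag mxE; apply: eq_bigr => j _.
by rewrite !mxE mulrAC mulrC expr2.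
Qed.

Lemma quadratic_lt0 (a c : R) : c != 0 -> exists t, t * t * a + 2 * (t * c) < 0.
Proof.
move=> c_neq0; pose p := `|a| + 1.
have p_gt0 : 0 < p by rewrite ltr_wpDl.
have ap_lt1 : a / p < 1.
  by rewrite ltr_pdivrMr // mul1r (le_lt_trans (ler_norm a)) ?ltrDl.
have c2p_gt0 : 0 < c ^+ 2 / p by rewrite divr_gt0 // exprn_even_gt0.
exists (- c / p).
have -> : - c / p * (- c / p) * a + 2 * (- c / p * c) = c ^+ 2 / p * (a / p - 2).
  by field; rewrite gt_eqF.
by rewrite pmulr_rlt0 //; lra.
Qed.

Lemma delta_bilinE n p (A : 'M[R]_(n, p)) a b i j :
  ((a *: delta_mx i 0 : 'cV_n)^T *m A *m (b *: delta_mx j 0 : 'cV_p)) 0 0 =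
  a * b * A i j.
Proof.
rewrite [(a *: _)^T]linearZ /= trmx_delta -!scalemxAl -scalemxAr -rowE -colE !mxE.
by rewrite mulrA.
Qed.

Lemma col_mx3_exists {r m s0 p} (x : 'M[R]_(r + m + s0, p)) :
  exists u v w, x = col_mx (col_mx u v) w.
Proof.
by exists (usubmx (usubmx x)), (dsubmx (usubmx x)), (dsubmx x); rewrite !vsubmxK.
Qed.

Lemma qform_simplB r m s0 (B11 : 'M[R]_r) (C : 'M[R]_(r, m)) (G : 'M[R]_s0) u v w :
  qform (simplB B11 C G) (col_mx (col_mx u v) w) (col_mx (col_mx u v) w) =
  qform B11 u u + 2 * (u^T *m C *m v) 0 0 + qform G w w.
Proof.
rewrite /qform /simplB !tr_col_mx mul_row_block !mul_row_col ?mulmx0 ?mul0mx.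
rewrite addr0 add0r !mul_mx_row add_row_mx mul_row_col mulmx0 addr0 !mulmxDl.
have -> : v^T *m C^T *m u = (u^T *m C *m v)^T by rewrite !trmx_mul trmxK mulmxA.
rewrite !mxE; ring.
Qed.

Lemma dot_col_mx3 r m s0 (b1 u : 'cV[R]_r) (b2 v : 'cV[R]_m) (b3 w : 'cV[R]_s0) :
  ((col_mx (col_mx b1 b2) b3)^T *m col_mx (col_mx u v) w) 0 0 =
  (b1^T *m u) 0 0 + (b2^T *m v) 0 0 + (b3^T *m w) 0 0.
Proof. by rewrite !tr_col_mx !mul_row_col !mxE. Qed.

Lemma simplB_indefinite r m s0 (B11 : 'M[R]_r) (C : 'M[R]_(r, m)) (G : 'M[R]_s0) :
  B11^T = B11 -> G^T = G -> C != 0 -> indefinite (simplB B11 C G).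
Proof.
move=> B11_sym G_sym C_neq0.
have [[i j] /= Cij_neq0] : exists ij : 'I_r * 'I_m, C ij.1 ij.2 != 0.
  apply/existsP; apply: contraNT C_neq0 => /existsPn C0.
  by apply/eqP/matrixP => i j; rewrite mxE; apply/eqP/negbNE/(C0 (i, j)).
pose x (t : R) : 'cV_(r + m + s0) := col_mx (col_mx (t *: delta_mx i 0) (delta_mx j 0)) 0.
have qxE (t : R) : qform (simplB B11 C G) (x t) (x t) = t * t * B11 i i + 2 * (t * C i j).
  rewrite qform_simplB -[delta_mx j 0]scale1r /qform !delta_bilinE.
  by rewrite trmx0 !mul0mx mxE addr0 mulr1.
have [t1 qt1_lt0] := @quadratic_lt0 (B11 i i) _ Cij_neq0.
have [t2 qt2_lt0] : exists t, t * t * - B11 i i + 2 * (t * - C i j) < 0.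
  by apply: quadratic_lt0; rewrite oppr_eq0.
apply: (@symmetric_indefinite R _ _ (x t1) (x t2)); rewrite ?qxE //.
  by rewrite /simplB !tr_block_mx B11_sym G_sym trmxK !trmx0.
by rewrite -oppr_lt0; move: qt2_lt0; rewrite !mulrN -opprD.
Qed.

Lemma Lfun_lsA r m s0 u (v : 'cV[R]_m) (w : 'cV[R]_s0) :
  Lfun (lsA R (r + m + s0) r) 0 (col_mx (col_mx u v) w) = sqnorm u.
Proof.
set x := col_mx _ _; rewrite /Lfun subr0 qformE.
have diagE j : \sum_i x i 0 * lsA R (r + m + s0) r i j * x j 0 = (j < r)%:R * x j 0 ^+ 2.
  rewrite (bigD1 j) //= big1 ?addr0 => [|i /negPf ij].
    by rewrite !mxE eqxx /= mulrC mulrA expr2 mulrC.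
  by rewrite !mxE ij mulr0 mul0r.
rewrite (eq_bigr _ (fun j _ => diagE j)) big_split_ord /= [X in _ + X]big1 ?addr0.
  rewrite big_split_ord /= [X in _ + X]big1 ?addr0.
    by apply: eq_bigr => i _; rewrite !col_mxEu ltn_ord mul1r.
  by move=> i _; rewrite ltnNge leq_addr mul0r.
by move=> i _; rewrite ltnNge -addnA leq_addr mul0r.
Qed.

Lemma abs_entry_le_sqrt_sqnorm n (u : 'cV[R]_n) i : `|u i 0| <= Num.sqrt (sqnorm u).
Proof.
rewrite -sqrtr_sqr ler_sqrt ?sumr_ge0 // => [|j _]; last exact: sqr_ge0.
by rewrite /sqnorm (bigD1 i) //= lerDl sumr_ge0 // => j _; apply: sqr_ge0.
Qed.

Lemma quadratic_affine_le n (B : 'M[R]_n) (b u : 'cV[R]_n) :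
  Num.sqrt (sqnorm u) <= 1 ->
  `|qform B u u + 2 * (b^T *m u) 0 0| <=
    (\sum_j \sum_i `|B i j| + 2 * \sum_i `|b i 0|) * Num.sqrt (sqnorm u).
Proof.
set s := Num.sqrt _ => s_le1; have s_ge0 : 0 <= s := sqrtr_ge0 _.
have u_le i : `|u i 0| <= s := @abs_entry_le_sqrt_sqnorm _ u i.
rewrite [leRHS]mulrDl; apply: le_trans (ler_normD _ _) _; apply: lerD.
  rewrite qformE mulr_suml; apply: le_trans (ler_norm_sum _ _ _) _; apply: ler_sum => j _.
  rewrite mulr_suml; apply: le_trans (ler_norm_sum _ _ _) _; apply: ler_sum => i _.
  rewrite !normrM mulrAC mulrC ler_wpM2l //.
  by apply: le_trans (ler_piMl s_ge0 s_le1); apply: ler_pM.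
rewrite normrM -mulrA ger0_norm // ler_wpM2l // dotE mulr_suml.
apply: le_trans (ler_norm_sum _ _ _) _; apply: ler_sum => i _.
by rewrite normrM ler_wpM2l.
Qed.

Lemma quadratic_affine_small {n} (B : 'M[R]_n) (b : 'cV[R]_n) {D} : 0 < D ->
  exists2 e, 0 < e & forall u, sqnorm u < e ->
    `|qform B u u + 2 * (b^T *m u) 0 0| < D.
Proof.
move=> D_gt0; set K := \sum_j \sum_i `|B i j| + 2 * \sum_i `|b i 0|.
have K_ge0 : 0 <= K.
  by rewrite addr_ge0 ?mulr_ge0 ?sumr_ge0 // => j _; rewrite sumr_ge0.
have KD1_gt0 : 0 < K + D + 1 by lra.
pose e := D / (K + D + 1).
have e_gt0 : 0 < e by rewrite divr_gt0.
have e_lt1 : e < 1 by rewrite ltr_pdivrMr // mul1r; lra.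
have Ke_lt : K * e < D by rewrite mulrA ltr_pdivrMr // mulrC ltr_pM2l //; lra.
exists (e ^+ 2) => [|u u_small]; first exact: exprn_gt0.
have s_lt_e : Num.sqrt (sqnorm u) < e.
  by rewrite -(gtr0_norm e_gt0) -sqrtr_sqr ltr_sqrt ?exprn_gt0.
apply: le_lt_trans (@quadratic_affine_le _ B b u _) _; first exact/ltW/(lt_trans s_lt_e).
by apply: le_lt_trans Ke_lt; rewrite ler_wpM2l // ltW.
Qed.

Lemma linear_form_omitting_eq0 n (b : 'cV[R]_n) a :
  (forall v : 'cV_n, (b^T *m v) 0 0 != a) -> b = 0.
Proof.
move=> omit_a; apply/matrixP => j z; rewrite ord1 mxE.
apply: contraNeq (omit_a ((a / b j 0) *: delta_mx j 0 : 'cV_n)) => bj_neq0.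
by rewrite -scalemxAr -colE !mxE divfK.
Qed.

Lemma weighted_sqnorm_bounded_away n (g : 'rV[R]_n) c :
  (forall y : 'cV_n, \sum_j g 0 j * y j 0 ^+ 2 - c != 0) ->
  bounded_away_from0 (fun y : 'cV_n => \sum_j g 0 j * y j 0 ^+ 2 - c).
Proof.
move=> nonzero.
have c_neq0 : c != 0.
  move: (nonzero 0); rewrite big1 ?sub0r ?oppr_eq0 // => j _.
  by rewrite mxE expr0n mulr0.
have gc_le0 j : g 0 j * c <= 0.
  rewrite leNgt; apply/negP => gc_gt0.
  have g_neq0 : g 0 j != 0 by apply: contraTneq gc_gt0 => ->; rewrite mul0r ltxx.
  have cg_gt0 : 0 < c / g 0 j.
    have -> : c / g 0 j = g 0 j * c / g 0 j ^+ 2 by field.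
    by rewrite divr_gt0 // exprn_even_gt0.
  have := nonzero (\col_l ((l == j)%:R * Num.sqrt (c / g 0 j))).
  rewrite (bigD1 j) //= big1 ?addr0 => [|l lj]; last first.
    by rewrite !mxE (negPf lj) mul0r expr0n mulr0.
  by rewrite !mxE eqxx mul1r sqr_sqrtr ?ltW // mulrC divfK // subrr eqxx.
exists `|c|; first by rewrite normr_gt0.
move=> y; set S := \sum_j _.
have cS_le0 : c * S <= 0.
  rewrite mulr_sumr; apply: sumr_le0 => j _.
  by rewrite mulrA [c * _]mulrC mulr_le0_ge0 ?sqr_ge0.
case: (ltgtP c 0) c_neq0 => [c_lt0|c_gt0|->]; rewrite ?eqxx // => _.
- by rewrite ltr0_norm // ler_normr; apply/orP; left; nra.
- by rewrite gtr0_norm // ler_normr; apply/orP; right; nra.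
Qed.

Lemma diag_quadric_bounded_away n (g : 'rV[R]_n) (b : 'cV[R]_n) k :
  (forall j, g 0 j != 0) ->
  (forall w, qform (diag_mx g) w w + 2 * (b^T *m w) 0 0 - k != 0) ->
  bounded_away_from0 (fun w => qform (diag_mx g) w w + 2 * (b^T *m w) 0 0 - k).
Proof.
move=> g_neq0 nonzero.
pose s : 'cV_n := \col_j (b j 0 / g 0 j).
pose c := k + \sum_j g 0 j * s j 0 ^+ 2.
have shiftE w : qform (diag_mx g) w w + 2 * (b^T *m w) 0 0 - k =
    \sum_j g 0 j * (w + s) j 0 ^+ 2 - c.
  have sqE j : g 0 j * (w + s) j 0 ^+ 2 =
      g 0 j * w j 0 ^+ 2 + 2 * (b j 0 * w j 0) + g 0 j * s j 0 ^+ 2.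
    by rewrite !mxE; field.
  rewrite qform_diag dotE /c (eq_bigr _ (fun j _ => sqE j)) !big_split /= -mulr_sumr.
  ring.
have [d d_gt0 d_le] : bounded_away_from0 (fun y : 'cV_n => \sum_j g 0 j * y j 0 ^+ 2 - c).
  apply: weighted_sqnorm_bounded_away => y.
  by have := nonzero (y - s); rewrite shiftE subrK.
by exists d => // w; rewrite shiftE.
Qed.

Lemma simplB_decoupled_not_essentially_perfect r m s0 (B11 : 'M[R]_r)
    (g : 'rV[R]_s0) b k :
  (forall j, g 0 j != 0) ->
  ~ essentially_perfect (lsA R (r + m + s0) r) 0
      (simplB B11 (0 : 'M_(r, m)) (diag_mx g)) b k.
Proof.
move=> g_neq0; have [b1 [b2 [b3 ->]]] := col_mx3_exists b.
case=> L_pos [_ L_glb].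
pose f u := qform B11 u u + 2 * (b1^T *m u) 0 0.
pose h (v : 'cV_m) w :=
  qform (diag_mx g) w w + 2 * (b2^T *m v) 0 0 + 2 * (b3^T *m w) 0 0 - k.
have XE u v w : Xset (simplB B11 0 (diag_mx g)) (col_mx (col_mx b1 b2) b3) k
    (col_mx (col_mx u v) w) = (f u + h v w = 0).
  rewrite /Xset qform_simplB dot_col_mx3 mulmx0 mul0mx mxE /f /h.
  by congr (_ = 0); ring.
have f0 : f 0 = 0 by rewrite /f /qform trmx0 !mul0mx mulmx0 !mxE mulr0 addr0.
have h_neq0 v w : h v w != 0.
  apply/eqP => hvw0.
  have sqnorm0 : sqnorm (0 : 'cV_r) = 0.
    by rewrite /sqnorm big1 // => i _; rewrite mxE expr0n.
  have := L_pos (col_mx (col_mx 0 v) w).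
  by rewrite XE f0 hvw0 addr0 Lfun_lsA sqnorm0 ltxx => /(_ erefl).
have b2_0 : b2 = 0.
  apply: (@linear_form_omitting_eq0 _ _ (k / 2)) => v.
  apply: contra_neq (h_neq0 v 0) => b2v.
  by rewrite /h b2v /qform trmx0 !mulmx0 !mxE; field.
have [d d_gt0 h_ge] :
    bounded_away_from0 (fun w => qform (diag_mx g) w w + 2 * (b3^T *m w) 0 0 - k).
  apply: diag_quadric_bounded_away => // w.
  by have := h_neq0 0 w; rewrite /h b2_0 trmx0 mul0mx mxE mulr0 addr0.
have [e e_gt0 f_small] := quadratic_affine_small B11 b1 d_gt0.
suff : e <= 0 by rewrite leNgt e_gt0.
apply: L_glb => x; have [u [v [w ->]]] := col_mx3_exists x.
rewrite XE => /eqP; rewrite addr_eq0 Lfun_lsA leNgt => /eqP fE; apply/negP => /f_small.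
by rewrite -/(f u) fE normrN /h b2_0 trmx0 mul0mx mxE mulr0 addr0 ltNge h_ge.
Qed.

End LeastSquares.

Theorem corollary5p1 (R : rcfType) (r m s0 : nat)
    (B11 : 'M[R]_r) (C10 : 'M[R]_(r, m)) (G0 : 'M[R]_s0)
    (b : 'cV[R]_(r + m + s0)) (k : R) :
  (1 <= r)%N -> (0 < m + s0)%N ->
  B11^T = B11 ->
  is_diag_mx G0 -> G0 \in unitmx ->
  (exists x, Xset (simplB B11 C10 G0) b k x) ->
  essentially_perfect (lsA R (r + m + s0) r) 0 (simplB B11 C10 G0) b k ->
  indefinite (simplB B11 C10 G0).
Proof.
move=> _ _ B11_sym /diag_mxP[g ->] G_unit _ ep.
have g_neq0 j : g 0 j != 0.
  by move: G_unit; rewrite unitmxE det_diag unitfE => /prodf_neq0; apply.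
have [C0 | C_neq0] := eqVneq C10 0.
  by exfalso; move: ep; rewrite C0; apply: simplB_decoupled_not_essentially_perfect.
exact: simplB_indefinite B11_sym (tr_diag_mx g) C_neq0.
Qed.
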